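(* (a) There exist $n$ and a linear subspace $X\subset \mathrm{Mat}_{n\times n}(\mathbb{R})$ such that $\mathrm{MinRank}(X\otimes X)<(\mathrm{MinRank}(X))^2$. (b) For every integer $N\ge 0$ there exist $n$ and a linear subspace $X\subset\mathrm{Mat}_{n\times n}(\mathbb{R})$ such that $(\mathrm{MinRank}(X))^2-\mathrm{MinRank}(X\otimes X)\ge N$.
   Context: For a nonzero linear subspace $X\subset\mathrm{Mat}_{n\times n}(\mathbb{R})$, $\mathrm{MinRank}(X)$ is the minimal rank of a nonzero matrix in $X$. $X\otimes X\subset \mathrm{Mat}_{n^2\times n^2}(\mathbb{R})$ denotes the linear span of all Kronecker products $x\otimes y$ with $x,y\in X$. *)

From HB Require Import structures.
From mathcomp Require Import all_boot all_order all_algebra.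
From mathcomp Require Import boolp reals.
From mathcomp.real_closed Require Import mxtens.
Set Implicit Arguments. Unset Strict Implicit. Unset Printing Implicit Defensive.
Import GRing.Theory.
Local Open Scope ring_scope.

(* Kronecker product: tensmx (A *t B) from mathcomp real_closed mxtens.v,
   (A *t B) (i1*n+i2, j1*n+j2) = A i1 j1 * B i2 j2. *)

Definition has_rank_in (R : realType) (n : nat) (X : {vspace 'M[R]_n}) (r : nat) :=
  exists2 A : 'M[R]_n, A \in X & (A != 0) /\ \rank A = r.

(* MinRank X = minimal rank of a nonzero matrix of X (all ranks are <= n);
   for X = 0 this returns the default value n (irrelevant: X nonzero below). *)
Definition MinRank (R : realType) (n : nat) (X : {vspace 'M[R]_n}) : nat :=
  \big[minn/n]_(r < n.+1 | `[< has_rank_in X r >]) (r : nat).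

(* X (x) X = linear span of all Kronecker products x *t y with x, y in X *)
Definition tens_space (R : realType) (n : nat) (X : {vspace 'M[R]_n})
  : {vspace 'M[R]_(n * n)} :=
  (\sum_(x <- vbasis X) \sum_(y <- vbasis X) <[ (x *t y : 'M[R]_(n * n)) ]>)%VS.

(* If J^2 = -1, every nonzero a + bJ is invertible (multiply by a - bJ), so
   X = span(1, J) has MinRank n.  Now X (x) X contains 1 - T with T = J (x) J,
   an involution, so (1 - T)(1 + T) = 0; if moreover K^2 = 1 and K anticommutes
   with J, then K (x) 1 conjugates 1 + T into 1 - T, hence rank (1 - T) is at
   most n^2/2.  Such J and K exist in every even dimension (tensor the 2 x 2
   rotation and reflection with 1), so MinRank X ^ 2 - MinRank (X (x) X) is at
   least n^2/2. *)

From HB Require Import structures.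
From mathcomp Require Import all_boot all_order all_algebra.
From mathcomp Require Import boolp reals.
From mathcomp.real_closed Require Import mxtens.
From mathcomp Require Import zify.
Set Implicit Arguments. Unset Strict Implicit. Unset Printing Implicit Defensive.
Import Order.TTheory GRing.Theory Num.Theory.
Local Open Scope ring_scope.

Section KroneckerBilinear.
Variables (R : comPzRingType) (m n p q : nat).
Implicit Types (A B : 'M[R]_(m, n)) (C D : 'M[R]_(p, q)).

Lemma tensmxDl A B C : (A + B) *t C = A *t C + B *t C.
Proof. by apply/matrixP=> i j; rewrite !mxE mulrDl. Qed.

Lemma tensmxDr A C D : A *t (C + D) = A *t C + A *t D.
Proof. by apply/matrixP=> i j; rewrite !mxE mulrDr. Qed.

Lemma tensmxZl a A C : (a *: A) *t C = a *: (A *t C).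
Proof. by apply/matrixP=> i j; rewrite !mxE mulrA. Qed.

Lemma tensmxZr a A C : A *t (a *: C) = a *: (A *t C).
Proof. by apply/matrixP=> i j; rewrite !mxE mulrCA. Qed.

Lemma tensmxNl A C : (- A) *t C = - (A *t C).
Proof. by apply/matrixP=> i j; rewrite !mxE mulNr. Qed.

Lemma tensmxNr A C : A *t (- C) = - (A *t C).
Proof. by apply/matrixP=> i j; rewrite !mxE mulrN. Qed.

Lemma tensmx_suml I (r : seq I) (P : pred I) (F : I -> 'M[R]_(m, n)) C :
  (\sum_(i <- r | P i) F i) *t C = \sum_(i <- r | P i) F i *t C.
Proof.
by apply: (big_morph (fun M => M *t C)) => [? ?|]; rewrite ?tensmxDl ?tens0mx.
Qed.

Lemma tensmx_sumr I (r : seq I) (P : pred I) A (F : I -> 'M[R]_(p, q)) :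
  A *t (\sum_(i <- r | P i) F i) = \sum_(i <- r | P i) A *t F i.
Proof.
by apply: (big_morph (fun M => A *t M)) => [? ?|]; rewrite ?tensmxDr ?tensmx0.
Qed.

End KroneckerBilinear.

Lemma tensmx11 (R : comPzRingType) m n :
  (1%:M : 'M[R]_m) *t (1%:M : 'M[R]_n) = 1%:M.
Proof.
apply/matrixP=> i j.
case: (mxtens_indexP i) => i1 i2; case: (mxtens_indexP j) => j1 j2.
rewrite tensmxE !mxE (can_eq (@mxtens_indexK _ _)) xpair_eqE.
by case: (i1 == j1); case: (i2 == j2); rewrite ?mulr1 ?mulr0 ?mul0r.
Qed.

Section MinRankBounds.
Variables (R : realType) (n : nat) (X : {vspace 'M[R]_n}).

Lemma memv_tens_space x y : x \in X -> y \in X -> x *t y \in tens_space X.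
Proof.
have basis_tens u v : u \in (vbasis X : seq _) -> v \in (vbasis X : seq _) ->
    u *t v \in tens_space X.
  move=> uX vX; rewrite /tens_space (big_rem u) //=.
  apply: (subvP (addvSl _ _)); rewrite (big_rem v) //=.
  exact: (subvP (addvSl _ _)) (memv_line _).
move=> /coord_vbasis -> /coord_vbasis ->; rewrite tensmx_suml.
apply: rpred_sum => i _; rewrite tensmx_sumr; apply: rpred_sum => j _.
by rewrite tensmxZl tensmxZr !rpredZ // basis_tens // mem_nth ?size_tuple.
Qed.

Lemma MinRank_le_rank A : A \in X -> A != 0 -> (MinRank X <= \rank A)%N.
Proof.
move=> AX A_neq0; have rkA : (\rank A < n.+1)%N by rewrite ltnS rank_leq_row.
rewrite /MinRank -minEnat.
apply: (@bigmin_le_cond _ nat _ n (Ordinal rkA) _ val).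
by apply/asboolP; exists A.
Qed.

Lemma MinRank_le_dim : (MinRank X <= n)%N.
Proof. by rewrite /MinRank -minEnat; apply: (@bigmin_le_id _ nat). Qed.

Lemma le_MinRank k : (k <= n)%N ->
  (forall A, A \in X -> A != 0 -> (k <= \rank A)%N) -> (k <= MinRank X)%N.
Proof.
move=> le_kn rk_ge; rewrite /MinRank -minEnat; apply: (@le_bigmin _ nat) => // r.
by move=> /asboolP[A AX [A_neq0 <-]]; apply: rk_ge.
Qed.

End MinRankBounds.

Section AntiConjugatedInvolution.
Variables (F : numFieldType) (n : nat) (S T : 'M[F]_n).
Hypotheses (SS : S *m S = 1%:M) (TT : T *m T = 1%:M) (STS : S *m T *m S = - T).

Lemma conj_addr_involution : S *m (1%:M + T) *m S = 1%:M - T.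
Proof. by rewrite mulmxDr mulmxDl mulmx1 SS STS. Qed.

Lemma mxrank_subr_involution : (\rank (1%:M - T)%R * 2 <= n)%N.
Proof.
have le_rk : (\rank (1%:M - T)%R <= \rank (1%:M + T)%R)%N.
  rewrite -conj_addr_involution.
  exact: leq_trans (mxrankM_maxl _ _) (mxrankM_maxr _ _).
have orth : (1%:M - T) *m (1%:M + T) = 0.
  by rewrite mulmxBl !mulmxDr !mul1mx mulmx1 TT [T + _]addrC subrr.
by have := mulmx0_rank_max orth; lia.
Qed.

Lemma subr_involution_neq0 : (0 < n)%N -> 1%:M - T != 0.
Proof.
move=> n_gt0; rewrite subr_eq0; apply/eqP => T1.
have two1_eq0 : (1%:M : 'M[F]_n) *+ 2 = 0.
  by move: STS; rewrite -T1 mulmx1 SS mulr2n => {1}->; rewrite addNr.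
move/eqP: two1_eq0; rewrite -scaler_nat -mxrank_eq0 mxrank_scale_nz ?mxrank1.
  by move=> /eqP n0; rewrite n0 in n_gt0.
by rewrite pnatr_eq0.
Qed.

End AntiConjugatedInvolution.

Definition complex_span (F : fieldType) n (J : 'M[F]_n) : {vspace 'M[F]_n} :=
  (<[1%:M]> + <[J]>)%VS.

Section ComplexSpan.
Variables (F : realFieldType) (n : nat) (J : 'M[F]_n).
Hypothesis JJ : J *m J = - 1%:M.

Lemma memv_complex_span1 : 1%:M \in complex_span J.
Proof. exact: (subvP (addvSl _ _)) (memv_line _). Qed.

Lemma memv_complex_spanJ : J \in complex_span J.
Proof. exact: (subvP (addvSr _ _)) (memv_line _). Qed.

Lemma mxrank_complex_span A : A \in complex_span J -> A != 0 -> \rank A = n.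
Proof.
move=> /memv_addP[_ /vlineP[a ->] [_ /vlineP[b ->] ->]] A_neq0.
have norm_neq0 : a ^+ 2 + b ^+ 2 != 0.
  apply: contra A_neq0; rewrite paddr_eq0 ?sqr_ge0 // !sqrf_eq0.
  by case/andP=> /eqP-> /eqP->; rewrite !scale0r addr0.
have conj_mul :
    (a *: 1%:M + b *: J) *m (a *: 1%:M - b *: J) = (a ^+ 2 + b ^+ 2) *: 1%:M.
  rewrite mulmxDl !mulmxBr -!scalemxAl -!scalemxAr !mul1mx !mulmx1 JJ.
  by rewrite !scalerA scalerN opprK [b * a]mulrC addrA subrK -!expr2 scalerDl.
apply/eqP; rewrite eqn_leq rank_leq_row -{1}(mxrank1 F n).
by rewrite -(mxrank_scale_nz _ norm_neq0) -conj_mul mxrankM_maxl.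
Qed.

End ComplexSpan.

Section CliffordPair.
Variable R : comPzRingType.

Definition rot2 : 'M[R]_2 :=
  \matrix_(i, j) nth 0 (nth [::] [:: [:: 0; -1]; [:: 1; 0]] i) j.
Definition refl2 : 'M[R]_2 :=
  \matrix_(i, j) nth 0 (nth [::] [:: [:: 1; 0]; [:: 0; -1]] i) j.

Local Ltac mx2_entrywise :=
  apply/matrixP=> -[[|[|//]] ?] [[|[|//]] ?];
  rewrite !mxE !big_ord_recl !big_ord0 !mxE /=;
  by rewrite ?(mul0r, mulr0, mul1r, mulr1, addr0, add0r, oppr0, mulrNN, subrr).

Lemma rot2_sqr : rot2 *m rot2 = - 1%:M.
Proof. mx2_entrywise. Qed.

Lemma refl2_sqr : refl2 *m refl2 = 1%:M.
Proof. mx2_entrywise. Qed.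

Lemma refl2_rot2 : refl2 *m rot2 = - (rot2 *m refl2).
Proof. mx2_entrywise. Qed.

Lemma clifford_pair m : exists J K : 'M[R]_(m * 2),
  [/\ J *m J = - 1%:M, K *m K = 1%:M & K *m J = - (J *m K)].
Proof.
exists (1%:M *t rot2), (1%:M *t refl2).
by rewrite !tensmx_mul !mulmx1 rot2_sqr refl2_sqr refl2_rot2 !tensmxNr tensmx11.
Qed.

End CliffordPair.

Section ComplexSpanMinRank.
Variables (R : realType) (n : nat) (J : 'M[R]_n).
Hypothesis JJ : J *m J = - 1%:M.

Lemma MinRank_complex_span : MinRank (complex_span J) = n.
Proof.
apply/eqP; rewrite eqn_leq MinRank_le_dim le_MinRank // => A AX A_neq0.
by rewrite (mxrank_complex_span JJ).
Qed.

Variable K : 'M[R]_n.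
Hypotheses (n_gt0 : (0 < n)%N) (KK : K *m K = 1%:M) (KJ : K *m J = - (J *m K)).

Lemma MinRank_tens_complex_span :
  (MinRank (tens_space (complex_span J)) * 2 <= n * n)%N.
Proof.
set T := J *t J; set S := K *t (1%:M : 'M[R]_n).
have TT : T *m T = 1%:M by rewrite tensmx_mul JJ tensmxNl tensmxNr opprK tensmx11.
have SS : S *m S = 1%:M by rewrite tensmx_mul KK mulmx1 tensmx11.
have STS : S *m T *m S = - T.
  by rewrite !tensmx_mul KJ mulNmx -(mulmxA J) KK mulmx1 mul1mx mulmx1 tensmxNl.
have memT : 1%:M - T \in tens_space (complex_span J).
  by rewrite -tensmx11 rpredB ?memv_tens_space
             ?memv_complex_span1 ?memv_complex_spanJ.
apply: leq_trans (mxrank_subr_involution SS TT STS).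
rewrite leq_mul2r; apply/orP; right.
apply: MinRank_le_rank memT _.
by rewrite (subr_involution_neq0 SS STS) ?muln_gt0 ?n_gt0.
Qed.

End ComplexSpanMinRank.

Theorem mainTheorem2 (R : realType) :
  (exists (n : nat) (X : {vspace 'M[R]_n}),
      X != 0%VS /\ (MinRank (tens_space X) < (MinRank X) ^ 2)%N) /\
  (forall N : nat, exists (n : nat) (X : {vspace 'M[R]_n}),
      X != 0%VS /\ (N + MinRank (tens_space X) <= (MinRank X) ^ 2)%N).
Proof.
suff gap N : exists (n : nat) (X : {vspace 'M[R]_n}),
    X != 0%VS /\ (N + MinRank (tens_space X) <= (MinRank X) ^ 2)%N.
  split; last exact: gap.
  by have [n [X]] := gap 1%N; rewrite add1n; exists n, X.
have [J [K [JJ KK KJ]]] := clifford_pair R N.+1.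
exists (N.+1 * 2)%N, (complex_span J); split.
  apply: contraTneq (memv_complex_span1 J) => ->.
  by rewrite memv0 -mxrank_eq0 mxrank1.
have := MinRank_tens_complex_span JJ isT KK KJ.
rewrite (MinRank_complex_span JJ); move: (MinRank _) => t; nia.
Qed.
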